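(* Assume $t_m=1$. Then every maximal left special factor of $u_\beta$ contains at least one non-zero letter.
   Context: $\beta>1$ is a simple Parry number with $d_\beta(1)=t_1\cdots t_{m-1}t_m$, $m\ge2$, nonnegative integer digits, $t_1\ge1$, satisfying the Parry condition ($t_i\cdots t_m0^\omega$ lexicographically strictly smaller than $t_1\cdots t_m0^\omega$ for $2\le i\le m$). $\varphi$ is the substitution on $\mathcal A=\{0,\dots,m-1\}$ with $\varphi(k)=0^{t_{k+1}}(k+1)$ for $0\le k\le m-2$, $\varphi(m-1)=0^{t_m}$, and $u_\beta=\lim_n\varphi^n(0)$ is its fixed point. A factor $w$ is left special if at least two distinct letters $a$ make $aw$ a factor of $u_\beta$; a left special factor $w$ is maximal if for no letter $a$ is $wa$ left special. *)

From mathcomp Require Import all_boot.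
Set Implicit Arguments. Unset Strict Implicit. Unset Printing Implicit Defensive.

(* Digits d_beta(1) = t_1 ... t_m are stored 0-based: t_{k+1} = nth 0 t k,
   m = size t.  Letters of the alphabet {0,...,m-1} are natural numbers. *)

Definition lex_lt (f g : nat -> nat) : Prop :=
  exists k, (forall j, j < k -> f j = g j) /\ f k < g k.

(* Parry condition: for 2 <= i <= m, t_i...t_m 0^omega <lex t_1...t_m 0^omega *)
Definition parry_cond (t : seq nat) : Prop :=
  forall i, 2 <= i <= size t ->
    lex_lt (fun j => nth 0 (drop i.-1 t) j) (fun j => nth 0 t j).

Definition phi (t : seq nat) (k : nat) : seq nat :=
  if k.+2 <= size t then nseq (nth 0 t k) 0 ++ [:: k.+1]
  else nseq (nth 0 t k) 0.

Definition phi_word (t : seq nat) (w : seq nat) : seq nat :=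
  flatten (map (phi t) w).

(* u_beta = lim phi^n(0); its n-th letter (0-based) is read off phi^{n+1}(0),
   which has length > n since t_1 >= 1 and all images are nonempty when t_m >= 1 *)
Definition u_beta (t : seq nat) (n : nat) : nat :=
  nth 0 (iter n.+1 (phi_word t) [:: 0]) n.

Definition factor (t : seq nat) (w : seq nat) : Prop :=
  exists i, w = mkseq (fun j => u_beta t (i + j)) (size w).

Definition left_special (t : seq nat) (w : seq nat) : Prop :=
  exists a b, a <> b /\ factor t (a :: w) /\ factor t (b :: w).

Definition maximal_left_special (t : seq nat) (w : seq nat) : Prop :=
  left_special t w /\ forall a, ~ left_special t (rcons w a).

From mathcomp Require Import all_boot zify.
Set Implicit Arguments. Unset Strict Implicit. Unset Printing Implicit Defensive.

(* Since t_m = 1, phi (m-1) = 0, while every other image phi k = 0^{t_{k+1}} (k+1)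
   ends with a non-zero letter and, by the Parry condition, t_{k+1} <= t_1.
   Desubstituting, a two-letter factor a (d+1) of u_beta either has a = 0 (when
   t_{d+1} > 0) or comes from a factor c d with a the last letter of phi c; by
   induction on j >= 1 this shows that j j is never a factor and that j has a unique
   left extension. Hence 0^{t_1+2} is not a factor (it would come from (m-1)(m-1)),
   and 0^{t_1+1}, whose left extensions are last letters of phi c for factors
   c (m-1), has a unique left extension. Finally, for k <= t_1 the factors 0^{t_1+1} 1
   and 1 0^{t_1} 1 show that 0^k stays left special after appending a letter, so no
   word 0^k is maximal left special. *)

Lemma cat_pair_nonnil (S : Type) (x y : S) w1 w2 :
  [:: x; y] = w1 ++ w2 -> w1 <> [::] -> w2 <> [::] -> w1 = [:: x] /\ w2 = [:: y].
Proof.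
case: w1 w2 => [|a [|b w1]] [|c [|d w2]] //=; first by case=> -> ->.
all: by case=> _ _; case: w1.
Qed.

Section SeqFacts.
Variable S : eqType.

Lemma prefix_cat_split (w s1 s2 : seq S) :
  prefix w (s1 ++ s2) -> prefix w s1 \/ exists2 w2, w = s1 ++ w2 & prefix w2 s2.
Proof.
rewrite prefixE take_cat => /eqP <-; case: ltnP => _; first by left; exact: prefix_take.
by right; exists (take (size w - size s1) s2) => //; exact: prefix_take.
Qed.

Lemma prefix_catl_size (w s1 s2 : seq S) :
  size s1 <= size w -> prefix w (s1 ++ s2) -> prefix s1 w.
Proof.
move=> le_s1w /prefix_cat_split [/prefixP [r def_s1]|[w2 -> _]]; last exact: prefix_prefix.
move: le_s1w; rewrite def_s1 size_cat -[X in _ <= X]addn0 leq_add2l leqn0 size_eq0.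
by move=> /eqP ->; rewrite cats0 prefix_refl.
Qed.

Lemma prefix_rcons_nseq (x y : S) k n : k <= n ->
  prefix (rcons (nseq k x) (if k < n then x else y)) (rcons (nseq n x) y).
Proof.
rewrite leq_eqVlt => /orP [/eqP ->|lt_kn]; first by rewrite ltnn prefix_refl.
rewrite lt_kn.
have -> : rcons (nseq k x) x = nseq k.+1 x by elim: k {lt_kn} => //= k ->.
by rewrite -(subnKC lt_kn) nseqD rcons_cat prefix_prefix.
Qed.

Lemma infix_cat_split (w s1 s2 : seq S) : infix w (s1 ++ s2) ->
  [\/ infix w s1, infix w s2 |
      exists w1 w2, [/\ w = w1 ++ w2, w1 != [::], w2 != [::], suffix w1 s1 & prefix w2 s2]].
Proof.
elim: s1 => [|x s1 IH]; first by constructor 2.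
rewrite cat_cons infix_consl => /orP [/(@prefix_cat_split w (x :: s1)) [|[w2 ->]]|/IH []].
- by constructor 1; exact: prefixW.
- have [-> _|nz_w2 pre_w2] := eqVneq w2 [::]; first by constructor 1; rewrite cats0 infix_refl.
  by constructor 3; exists (x :: s1), w2; rewrite suffix_refl.
- by constructor 1; exact: infix_trans (infix_cons _ _).
- by constructor 2.
- move=> [w1 [w2 [-> nz1 nz2 suf pre]]]; constructor 3; exists w1, w2; split=> //.
  exact: suffix_trans suf (suffix_cons _ _).
Qed.

Lemma infix_flatten_map (T : eqType) (f : T -> seq S) (v : seq T) (w : seq S) :
  w != [::] -> infix w (flatten (map f v)) ->
  (exists2 c, c \in v & infix w (f c)) \/
  exists c v' w1 w2, [/\ w = w1 ++ w2, w1 != [::], w2 != [::], suffix w1 (f c)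
                       & prefix w2 (flatten (map f v')) /\ suffix (c :: v') v].
Proof.
move=> nz_w; elim: v => [|c v IH] /=; first by case: (w) nz_w.
case/infix_cat_split => [w_c|/IH [[c' v_c' w_c']|IH_split]|].
- by left; exists c; rewrite ?mem_head.
- by left; exists c'; rewrite // inE v_c' orbT.
- move: IH_split => [c' [v' [w1 [w2 [-> nz1 nz2 suf [pre suf']]]]]].
  right; exists c', v', w1, w2; split=> //; split=> //.
  exact: suffix_trans suf' (suffix_cons _ _).
- move=> [w1 [w2 [-> nz1 nz2 suf pre]]]; right; exists c, v, w1, w2; split=> //.
  by split=> //; exact: suffix_refl.
Qed.

Lemma infix_last_rcons (x0 : S) (s : seq S) y :
  s != [::] -> infix [:: last x0 s; y] (s ++ [:: y]).
Proof.
case: s => // x s _.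
by rewrite [X in infix _ (X ++ _)]lastI -cats1 -catA suffix_infix.
Qed.

Lemma last_cat_pred1 (x0 x : S) (p w : seq S) :
  w != [::] -> all (pred1 x) w -> last x0 (p ++ w) = x.
Proof.
case: w => // y w _ /allP all_x; rewrite last_cat /=.
by apply/eqP/all_x; exact: mem_last.
Qed.

End SeqFacts.

Lemma infix_pair_nseq_rcons (a b k n : nat) :
  infix [:: a; b] (nseq n 0 ++ [:: k]) -> b != 0 -> [/\ a = 0, b = k & 0 < n].
Proof.
elim: n => [|n IH]; first by move/size_infix.
rewrite /= => /orP [/andP [/eqP -> pre_b] nz_b|/IH IHn /IHn [-> -> /ltnW]] //.
case: n {IH} pre_b => [|n] /=; first by rewrite andbT => /eqP.
by rewrite (negbTE nz_b).
Qed.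

Section BetaSubstitution.
Variable t : seq nat.
Hypothesis size_t : 2 <= size t.
Hypothesis t1_gt0 : 0 < nth 0 t 0.
Hypothesis parry : parry_cond t.
Hypothesis last_t : last 0 t = 1.

Local Notation t1 := (nth 0 t 0).
Local Notation top := (size t).-1.
Local Notation over_alphabet := (all (fun a => a < size t)).

Variant phi_spec (a : nat) : seq nat -> Prop :=
  | PhiBelowTop of a < top : phi_spec a (nseq (nth 0 t a) 0 ++ [:: a.+1])
  | PhiTop of a = top : phi_spec a [:: 0].

Lemma phiP a : a < size t -> phi_spec a (phi t a).
Proof.
rewrite /phi => lt_a; case: ltnP => [lt_a_top|ge_a_top]; first by constructor; lia.
have def_a : a = top by lia.
by rewrite def_a nth_last last_t; constructor.
Qed.

Lemma top_gt0 : 0 < top.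
Proof. by rewrite -ltnS prednK // ltnW. Qed.

Lemma phi0 : phi t 0 = nseq t1 0 ++ [:: 1].
Proof. by rewrite /phi size_t. Qed.

Lemma phi_top : phi t top = [:: 0].
Proof. by rewrite /phi nth_last last_t; case: ifP => //; lia. Qed.

Lemma phi_below_top a : a < top -> phi t a = nseq (nth 0 t a) 0 ++ [:: a.+1].
Proof. by move=> lt_a; case: (@phiP a) => // [|def_a]; lia. Qed.

Lemma digit_le_head i : nth 0 t i <= t1.
Proof.
case: (ltnP i (size t)) => [lt_i|ge_i]; last by rewrite nth_default.
case: i lt_i => [//|i] lt_i.
have [|k [eq_pre lt_k]] := parry (i := i.+2); first by rewrite lt_i.
case: k eq_pre lt_k => [|k] eq_pre lt_k; first by move: lt_k; rewrite nth_drop addn0 => /ltnW.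
by have := eq_pre 0 isT; rewrite nth_drop addn0 => ->.
Qed.

Lemma size_phi a : a < size t -> 0 < size (phi t a) <= t1.+1.
Proof.
by move=> /phiP [_|_]; rewrite ?size_cat ?size_nseq ?addn1 ?ltnS ?digit_le_head.
Qed.

Lemma phi_neq0 a : a < size t -> phi t a != [::].
Proof. by move=> /size_phi /andP [gt0 _]; rewrite -size_eq0 -lt0n. Qed.

Lemma last_phi a : a < size t -> last 0 (phi t a) = if a < top then a.+1 else 0.
Proof. by move=> /phiP [lt_a|->]; rewrite ?ltnn // lt_a cats1 last_rcons. Qed.

Lemma phi_last_zero a : a < size t -> last 0 (phi t a) = 0 -> a = top.
Proof. by move=> lt_a; rewrite last_phi //; case: ltnP => //; lia. Qed.

Lemma last_phi_succ c d : c < size t -> last 0 (phi t c) = d.+1 -> c = d.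
Proof.
by move=> lt_c; rewrite last_phi //; case: ifP => [_ /succn_inj|_ /esym /eqP].
Qed.

Lemma zero_digit_gt0 d : nth 0 t d = 0 -> 0 < d.
Proof. by case: d => // t10; move: t1_gt0; rewrite t10. Qed.

Lemma phi_over_alphabet a : a < size t -> over_alphabet (phi t a).
Proof.
move=> /phiP [lt_a|_] /=; last by lia.
by rewrite all_cat all_nseq /= andbT orbC (ltnW size_t) /=; lia.
Qed.

Lemma phi_word_cat u v : phi_word t (u ++ v) = phi_word t u ++ phi_word t v.
Proof. by rewrite /phi_word map_cat flatten_cat. Qed.

Lemma phi_word_pair a b : phi_word t [:: a; b] = phi t a ++ phi t b.
Proof. by rewrite /phi_word /= cats0. Qed.

Lemma phi_word_over_alphabet v : over_alphabet v -> over_alphabet (phi_word t v).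
Proof.
elim: v => [//|a v IH] /= /andP [lt_a /IH]; rewrite all_cat => ->.
by rewrite phi_over_alphabet.
Qed.

Lemma size_phi_word v : over_alphabet v -> size v <= size (phi_word t v).
Proof.
elim: v => [//|a v IH] /= /andP [/size_phi /andP [gt0 _] /IH le_v].
by rewrite size_cat -add1n leq_add.
Qed.

Lemma suffix_phi_zeros c w : c < size t -> w != [::] -> all (pred1 0) w ->
  suffix w (phi t c) -> c = top /\ w = [:: 0].
Proof.
move=> lt_c nz_w zero_w /suffixP [p def_c].
have c_top : c = top.
  by apply: phi_last_zero; rewrite // def_c (last_cat_pred1 _ _ nz_w zero_w).
split=> //; move: def_c nz_w; rewrite c_top phi_top.
by case: p => [-> //|y [|z p]] [_] // <-.
Qed.

Definition phi_iter n := iter n (phi_word t) [:: 0].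

Lemma phi_iter_over_alphabet n : over_alphabet (phi_iter n).
Proof. by elim: n => [|n IH] /=; [lia | exact: phi_word_over_alphabet]. Qed.

Lemma phi_iter_prefix n : prefix (phi_iter n) (phi_iter n.+1).
Proof.
elim: n => [|n /prefixP [s def_n1]].
  rewrite /= /phi_word /= cats0 phi0; case: (nth 0 t 0) t1_gt0 => [//|n _].
  exact: (prefix_prefix [:: 0]).
apply/prefixP; exists (phi_word t s).
by rewrite -[phi_iter n.+2]/(phi_word t (phi_iter n.+1)) {1}def_n1 phi_word_cat.
Qed.

Lemma phi_iter_prefix_le n N : n <= N -> prefix (phi_iter n) (phi_iter N).
Proof.
elim: N => [|N IH]; first by rewrite leqn0 => /eqP ->; exact: prefix_refl.
rewrite leq_eqVlt => /orP [/eqP ->|/IH pre]; first exact: prefix_refl.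
exact: prefix_trans pre (phi_iter_prefix N).
Qed.

Lemma size_phi_iter n : n < size (phi_iter n).
Proof.
elim: n => [//|n IH].
have /prefixP [s def_n] := phi_iter_prefix_le (leq0n n).
have := phi_iter_over_alphabet n; rewrite def_n /= => /andP [_ /size_phi_word le_s].
move: IH; rewrite /= def_n (phi_word_cat [:: 0]) size_cat.
rewrite [phi_word t [:: 0]]/phi_word /= cats0 phi0 size_cat size_nseq /=; lia.
Qed.

Lemma nth_phi_iter N k : k < size (phi_iter N) -> nth 0 (phi_iter N) k = u_beta t k.
Proof.
have nth_pre n m : n <= m -> k < size (phi_iter n) ->
    nth 0 (phi_iter m) k = nth 0 (phi_iter n) k.
  by move=> /phi_iter_prefix_le /prefixP [s ->] lt_k; rewrite nth_cat lt_k.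
move=> lt_k; rewrite /u_beta -/(phi_iter k.+1).
rewrite -(nth_pre _ _ (leq_maxl N k.+1) lt_k) (nth_pre _ _ (leq_maxr N k.+1)) //.
exact: ltnW (size_phi_iter k.+1).
Qed.

Lemma factorP w : factor t w <-> exists N, infix w (phi_iter N).
Proof.
split=> [[i def_w]|[N /infixP [p [q def_N]]]].
  exists (i + size w); set s := phi_iter _; apply/infixP.
  exists (take i s), (drop (size w) (drop i s)).
  suff {1}-> : w = take (size w) (drop i s) by rewrite !cat_take_drop.
  have lt_iw : i + size w < size s by exact: size_phi_iter.
  apply: (@eq_from_nth _ 0) => [|j lt_j].
    by rewrite size_take size_drop ltn_subRL lt_iw.
  rewrite (nth_take _ lt_j) nth_drop nth_phi_iter; last first.
    by apply: ltn_trans lt_iw; rewrite ltn_add2l.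
  by rewrite {1}def_w nth_mkseq.
exists (size p); apply: (@eq_from_nth _ 0); first by rewrite size_mkseq.
move=> j lt_j; rewrite nth_mkseq // -(@nth_phi_iter N); last first.
  by rewrite def_N !size_cat ltn_add2l ltn_addr.
by rewrite def_N nth_cat ltnNge leq_addr /= addKn nth_cat lt_j.
Qed.

Lemma factor_infix w w' : factor t w -> infix w' w -> factor t w'.
Proof.
by move=> /factorP [N w_N] w'_w; apply/factorP; exists N; exact: infix_trans w'_w w_N.
Qed.

Lemma factor_phi_word w : factor t w -> factor t (phi_word t w).
Proof.
move=> /factorP [N /infixP [p [q def_N]]]; apply/factorP; exists N.+1.
by apply/infixP; exists (phi_word t p), (phi_word t q); rewrite /= def_N !phi_word_cat.
Qed.

Lemma factor_over_alphabet w : factor t w -> over_alphabet w.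
Proof.
move=> /factorP [N /infixP [p [q def_N]]].
by have := phi_iter_over_alphabet N; rewrite def_N !all_cat => /and3P [].
Qed.

Lemma factor_desubst w : factor t w -> exists N, infix w (phi_word t (phi_iter N)).
Proof.
move=> /factorP [N w_N]; exists N.
exact: infix_trans w_N (prefixW (phi_iter_prefix N)).
Qed.

Lemma suffix_over_alphabet c v' v : suffix (c :: v') v -> over_alphabet v ->
  c < size t /\ over_alphabet v'.
Proof. by move=> /suffixP [p ->]; rewrite all_cat => /andP [_ /andP []]. Qed.

Lemma left_of_letter_phi_word v a d :
  over_alphabet v -> infix [:: a; d.+1] (phi_word t v) ->
  (0 < nth 0 t d /\ a = 0) \/
  (nth 0 t d = 0 /\ exists2 c, infix [:: c; d] v & a = last 0 (phi t c)).
Proof.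
move=> Av /infix_flatten_map [//|[c c_v]|[c [v' [w1 [w2 [def_w nz1 nz2]]]]]].
  have /phiP [lt_c_top|_] := allP Av c c_v => [|/size_infix //].
  by move=> /infix_pair_nseq_rcons /(_ isT) [-> /succn_inj -> ?]; left.
have [-> ->] := cat_pair_nonnil def_w (elimN eqP nz1) (elimN eqP nz2).
move=> /suffixP [p def_c] [pre /[dup] suf' /suffix_over_alphabet /(_ Av) [_]].
case: v' pre suf' => [//|e v''] pre suf' /andP [lt_e _].
move: pre => /=; case: (phiP lt_e) => [lt_e_top|_] //.
case def_te: (nth 0 t e) => [|n] //= /andP [/eqP /succn_inj def_e _].
right; split; first by rewrite def_e.
exists c; last by rewrite def_c cats1 last_rcons.
by rewrite def_e; apply: infix_trans (suffixW suf'); exact: (prefix_infix [:: c; e]).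
Qed.

Lemma head_of_zero_run v : over_alphabet v ->
  prefix (nseq t1.+1 0) (phi_word t v) -> exists v', v = top :: v'.
Proof.
case: v => [//|e v] /andP [lt_e _]; rewrite /phi_word /= -/(phi_word t v).
have /andP [_ le_e] := size_phi lt_e.
move=> /(prefix_catl_size (_ : size (phi t e) <= size (nseq t1.+1 0))).
rewrite size_nseq => /(_ le_e) /prefixP [q def_run]; exists v; congr (_ :: _).
apply: phi_last_zero => //; apply: (@last_cat_pred1 _ 0 0 [::] _ (phi_neq0 lt_e)).
by have := all_pred1_nseq 0 t1.+1; rewrite def_run all_cat => /andP [].
Qed.

Lemma no_zero_run_phi_word v : over_alphabet v -> ~~ infix [:: top; top] v ->
  ~~ infix (nseq t1.+2 0) (phi_word t v).
Proof.
move=> Av no_top2; apply/negP => /infix_flatten_map [//|[c c_v]|].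
  move/size_infix; rewrite size_nseq ltnNge.
  by have /andP [_ ->] := size_phi (allP Av c c_v).
move=> [c [v' [w1 [w2 [def_w nz1 nz2 suf [pre suf']]]]]].
have [lt_c Av'] := suffix_over_alphabet suf' Av.
have := all_pred1_nseq 0 t1.+2; rewrite def_w all_cat => /andP [zero1 _].
have [c_top def_w1] := suffix_phi_zeros lt_c nz1 zero1 suf.
move: def_w pre; rewrite def_w1 => -[<-] /(head_of_zero_run Av') [v'' def_v'].
move: suf'; rewrite def_v' c_top => /suffixW top2_v; move/negP: no_top2; apply.
exact: infix_trans (prefix_infix [:: top; top] v'') top2_v.
Qed.

Lemma left_of_zero_run_phi_word v x : over_alphabet v -> x != 0 ->
  infix (x :: nseq t1.+1 0) (phi_word t v) ->
  exists2 c, infix [:: c; top] v & x = last 0 (phi t c).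
Proof.
move=> Av nz_x /infix_flatten_map [//|[c c_v]|].
  move/size_infix; rewrite /= size_nseq ltnNge.
  by have /andP [_ ->] := size_phi (allP Av c c_v).
move=> [c [v' [w1 [w2 [def_w nz1 _ suf [pre suf']]]]]].
case: w1 def_w nz1 suf => [//|x' w1] [<- def_run] _ suf.
have [lt_c Av'] := suffix_over_alphabet suf' Av.
have w1_nil : w1 = [::].
  have [//|nz1] := eqVneq w1 [::].
  have : all (pred1 0) (w1 ++ w2) by rewrite -def_run /= all_pred1_nseq.
  rewrite all_cat => /andP [zero1 _].
  have [c_top def_w1] := suffix_phi_zeros lt_c nz1 zero1 (suffix_trans (suffix_cons _ _) suf).
  by move: suf => /suffixW /size_infix; rewrite c_top phi_top def_w1.
move: def_run pre suf; rewrite w1_nil /= => <- /(head_of_zero_run Av') [v'' def_v'].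
move=> /suffixP [p def_c]; exists c; last by rewrite def_c cats1 last_rcons.
move: suf'; rewrite def_v' => /suffixW; apply: infix_trans.
exact: (prefix_infix [:: c; top] v'').
Qed.

Lemma no_square_factor j : 0 < j <= top -> ~ factor t [:: j; j].
Proof.
elim: j => [//|d IH] /andP [_ le_d] /factor_desubst [N].
case/(left_of_letter_phi_word (phi_iter_over_alphabet N)) => [[_ //]|[td0 [c cd_N]]].
have cd : factor t [:: c; d] by apply/factorP; exists N.
have /andP [lt_c _] := factor_over_alphabet cd.
move=> /esym /(last_phi_succ lt_c) def_c; subst c.
by apply: IH cd; rewrite zero_digit_gt0 // ltnW.
Qed.

Lemma left_extension_unique j a b :
  0 < j <= top -> factor t [:: a; j] -> factor t [:: b; j] -> a = b.
Proof.
elim: j a b => [//|d IH] a b /andP [_ le_d] /factor_desubst [N] + /factor_desubst [N'].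
move=> /(left_of_letter_phi_word (phi_iter_over_alphabet N)) [[td ->]|[td [c cd ->]]];
move=> /(left_of_letter_phi_word (phi_iter_over_alphabet N')) [[td' ->]|[td' [c' c'd ->]]] //;
  try by [rewrite td' in td | rewrite td in td'].
congr (last 0 (phi t _)); apply: IH; first by rewrite zero_digit_gt0 // ltnW.
  by apply/factorP; exists N.
by apply/factorP; exists N'.
Qed.

Lemma left_extension_exists j : 0 < j <= top -> exists c, factor t [:: c; j].
Proof.
elim: j => [//|[|d] IH] /andP [_ le_d].
  exists (last 0 (nseq t1 0)); apply/factorP; exists 1.
  rewrite /phi_iter /= -[phi_word _ _]/(phi t 0 ++ [::]) cats0 phi0.
  by apply: infix_last_rcons; case: t1 t1_gt0.
have [|c cd] := IH; first by rewrite ltn0Sn ltnW.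
have /andP [lt_c _] := factor_over_alphabet cd.
have := factor_phi_word cd; rewrite phi_word_pair (phi_below_top le_d) catA => f.
exists (last 0 (phi t c ++ nseq (nth 0 t d.+1) 0)); apply: factor_infix f _.
by apply: infix_last_rcons; case: (phi t c) (phi_neq0 lt_c).
Qed.

Lemma factor_succ_zero k : k < top -> factor t [:: k; 0] -> factor t [:: k.+1; 0].
Proof.
move=> lt_k /factor_phi_word; rewrite phi_word_pair phi_below_top // phi0.
case: t1 t1_gt0 => [//|n] _ f; apply: factor_infix f _.
by rewrite -catA; apply: infix_catl; exact: (prefix_infix [:: k.+1; 0]).
Qed.

Lemma factor_zero_top k : k <= top -> factor t [:: k; 0] -> factor t [:: top; 0].
Proof.
move def_e : (top - k) => e; elim: e k def_e => [|e IH] k def_e le_k k0.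
  by have -> : top = k by lia.
apply: (IH k.+1); try lia; apply: factor_succ_zero k0; lia.
Qed.

Lemma factor_zeros_one : factor t (nseq t1.+1 0 ++ [:: 1]).
Proof.
have [|c ct] := @left_extension_exists top; first by rewrite top_gt0 leqnn.
have /andP [lt_c _] := factor_over_alphabet ct.
have := factor_phi_word ct; rewrite phi_word_pair phi_top => f.
have k0 : factor t [:: last 0 (phi t c); 0].
  by apply: factor_infix f _; exact: infix_last_rcons (phi_neq0 lt_c).
have /andP [lt_k _] := factor_over_alphabet k0.
have le_k : last 0 (phi t c) <= top by lia.
by have := factor_phi_word (factor_zero_top le_k k0); rewrite phi_word_pair phi_top phi0.
Qed.

Lemma factor_one_zeros_one : factor t (1 :: nseq t1 0 ++ [:: 1]).
Proof.
have zz : factor t [:: 0; 0].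
  apply: factor_infix factor_zeros_one _; case: t1 t1_gt0 => [//|n] _.
  exact: (prefix_infix [:: 0; 0]).
have := factor_phi_word zz; rewrite phi_word_pair phi0 => f; apply: factor_infix f _.
by rewrite -catA; apply: infix_catl; exact: infix_refl.
Qed.

Lemma no_long_zero_run : ~ factor t (nseq t1.+2 0).
Proof.
move=> /factor_desubst [N]; apply/negP/no_zero_run_phi_word.
  exact: phi_iter_over_alphabet.
apply/negP => top2_N; apply: (@no_square_factor top); first by rewrite top_gt0 leqnn.
by apply/factorP; exists N.
Qed.

Lemma zeros_left_extension_unique a b :
  factor t (a :: nseq t1.+1 0) -> factor t (b :: nseq t1.+1 0) -> a = b.
Proof.
have ext x : factor t (x :: nseq t1.+1 0) ->
    exists2 c, factor t [:: c; top] & x = last 0 (phi t c).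
  move=> fx; have nz_x : x != 0 by apply/eqP=> x0; apply: no_long_zero_run; rewrite x0 in fx.
  have [N /(left_of_zero_run_phi_word (phi_iter_over_alphabet N) nz_x) [c ct ->]] :=
    factor_desubst fx.
  by exists c => //; apply/factorP; exists N.
move=> /ext [c ct ->] /ext [c' c't ->]; congr (last 0 (phi t _)).
by apply: (@left_extension_unique top) => //; rewrite top_gt0 leqnn.
Qed.

Lemma zeros_left_special k : k <= t1 ->
  left_special t (rcons (nseq k 0) (if k < t1 then 0 else 1)).
Proof.
move=> le_k; have pre := prefix_rcons_nseq 0 1 le_k.
exists 0, 1; split=> //; split.
  by apply: factor_infix factor_zeros_one _; apply: prefixW; rewrite cats1.
by apply: factor_infix factor_one_zeros_one _; apply: prefixW; rewrite cats1.
Qed.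

Lemma zeros_not_left_special k : t1 < k -> ~ left_special t (nseq k 0).
Proof.
move=> lt_k [a [b [neq_ab [fa fb]]]].
have [def_k|lt_k1] := eqVneq k t1.+1.
  by apply: neq_ab; apply: zeros_left_extension_unique; rewrite -def_k.
apply: no_long_zero_run; apply: factor_infix fa _; apply: infix_trans (infix_cons _ _).
have le_k : t1.+2 <= k by lia.
by rewrite -(subnKC le_k) nseqD; exact: prefix_infix.
Qed.

End BetaSubstitution.

Theorem lemma6 (t : seq nat) :
  2 <= size t -> 1 <= nth 0 t 0 -> parry_cond t -> last 0 t = 1 ->
  forall w : seq nat, maximal_left_special t w -> has (fun a => a != 0) w.
Proof.
move=> size_t t1_gt0 parry last_t w [special_w maximal_w].
apply: contraT => /hasPn zero_w; exfalso.
have def_w : w = nseq (size w) 0.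
  by apply/all_pred1P/allP => x /zero_w; rewrite negbK.
rewrite def_w in special_w maximal_w.
have [le_w|lt_w] := leqP (size w) (nth 0 t 0).
  exact: maximal_w _ (zeros_left_special size_t t1_gt0 parry last_t le_w).
exact: (zeros_not_left_special size_t t1_gt0 parry last_t lt_w special_w).
Qed.
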